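(* Let $\mathcal{N}_1:\mathcal{L}(\mathcal{H}_{a1})\to\mathcal{L}(\mathcal{H}_{b1})$ and $\mathcal{N}_2:\mathcal{L}(\mathcal{H}_{a2})\to\mathcal{L}(\mathcal{H}_{b2})$ be quantum channels with $\dim\mathcal{H}_{ai}=\dim\mathcal{H}_{bi}=d_i$, and let $0<t\le1$. If $t\ge\max(1/d_1^2,1/d_2^2)$ then $$\mathcal{O}_t(\mathcal{N}_1\otimes\mathcal{N}_2)\ge\mathcal{O}_t(\mathcal{N}_1)\,\mathcal{O}_t(\mathcal{N}_2),$$ and if $\sqrt t\ge\max(1/d_1^2,1/d_2^2)$ then $$\mathcal{O}_t(\mathcal{N}_1\otimes\mathcal{N}_2)\ge\mathcal{O}_{\sqrt t}(\mathcal{N}_1)\,\mathcal{O}_{\sqrt t}(\mathcal{N}_2).$$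
   Context: For a channel $\mathcal{N}:\mathcal{L}(\mathcal{H}_a)\to\mathcal{L}(\mathcal{H}_b)$ with $\dim\mathcal{H}_a=\dim\mathcal{H}_b=\dim\mathcal{H}_r=d$, define $\mathcal{O}_s(\mathcal{N})=\max\{\langle\phi_{rb}|(\mathrm{id}_r\otimes\mathcal{N})(\rho_{ra})|\phi_{rb}\rangle:\ \rho_{ra}\succeq0,\ \mathrm{Tr}\rho_{ra}=1,\ \mathrm{Tr}(\rho_{ra}^2)\le s\}$, where $|\phi_{rb}\rangle=\frac1{\sqrt d}\sum_i|\alpha_i\rangle_r|\alpha_i\rangle_b$. For $\mathcal{N}_1\otimes\mathcal{N}_2$ the reference is $\mathcal{H}_r=\mathcal{H}_{r1}\otimes\mathcal{H}_{r2}$ and the maximally entangled state is $\phi_{r1b1}\otimes\phi_{r2b2}$. *)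

From HB Require Import structures.
From mathcomp Require Import all_boot all_order all_algebra.
From mathcomp Require Import complex mxtens.
From mathcomp Require Import boolp classical_sets reals.
Set Implicit Arguments. Unset Strict Implicit. Unset Printing Implicit Defensive.
Import Order.TTheory GRing.Theory Num.Theory.
Local Open Scope ring_scope.
Local Open Scope complex_scope.

Section QDefs.
Variable R : realType.
Local Notation C := R[i].

Definition adjmx {m n} (A : 'M[C]_(m, n)) : 'M[C]_(n, m) := map_mx Num.conj A^T.

Definition psd {n} (A : 'M[C]_n) : Prop :=
  adjmx A = A /\ forall v : 'cV[C]_n, 0 <= (adjmx v *m A *m v) 0 0.

Definition is_state {n} (rho : 'M[C]_n) : Prop := psd rho /\ \tr rho = 1.

Definition blockmx {k d} (X : 'M[C]_(k * d)) (i1 j1 : 'I_k) : 'M[C]_d :=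
  \matrix_(i2, j2) X (mxtens_index (i1, i2)) (mxtens_index (j1, j2)).

Definition id_tens {k d} (N : 'M[C]_d -> 'M[C]_d) (X : 'M[C]_(k * d))
  : 'M[C]_(k * d) :=
  \sum_(i1 < k) \sum_(j1 < k) (delta_mx i1 j1 *t N (blockmx X i1 j1)).

Definition is_channel {d} (N : 'M[C]_d -> 'M[C]_d) : Prop :=
  [/\ (forall (a : C) (X Y : 'M[C]_d), N (a *: X + Y) = a *: N X + N Y),
      (forall (k : nat) (X : 'M[C]_(k * d)), psd X -> psd (id_tens N X)) &
      (forall X : 'M[C]_d, \tr (N X) = \tr X)].

Definition chan_tens {d1 d2} (N1 : 'M[C]_d1 -> 'M[C]_d1)
  (N2 : 'M[C]_d2 -> 'M[C]_d2) (X : 'M[C]_(d1 * d2)) : 'M[C]_(d1 * d2) :=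
  \sum_(i1 < d1) \sum_(j1 < d1) \sum_(i2 < d2) \sum_(j2 < d2)
     (X (mxtens_index (i1, i2)) (mxtens_index (j1, j2)) *:
        (N1 (delta_mx i1 j1) *t N2 (delta_mx i2 j2))).

Definition max_ent (d : nat) : 'cV[C]_(d * d) :=
  ((Num.sqrt (d%:R : R))^-1)%:C *:
    \col_k (if (mxtens_unindex k).1 == (mxtens_unindex k).2 :> nat
            then 1 else 0).

Definition ent_fid {d} (N : 'M[C]_d -> 'M[C]_d) (rho : 'M[C]_(d * d)) : C :=
  (adjmx (max_ent d) *m id_tens N rho *m max_ent d) 0 0.

(* O_s(N) = max { <phi|(id (x) N)(rho)|phi> : rho state, Tr rho^2 <= s } ;
   the max is attained (compact feasible set), so it equals the sup. *)
Definition Opt {d} (s : R) (N : 'M[C]_d -> 'M[C]_d) : R :=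
  sup [set x : R | exists rho : 'M[C]_(d * d),
         [/\ is_state rho, \tr (rho *m rho) <= s%:C & x%:C = ent_fid N rho]].

End QDefs.

From HB Require Import structures.
From mathcomp Require Import all_boot all_order all_algebra.
From mathcomp Require Import complex mxtens spectral ring.
From mathcomp Require Import boolp classical_sets reals.
Set Implicit Arguments. Unset Strict Implicit. Unset Printing Implicit Defensive.
Import Order.TTheory GRing.Theory Num.Theory.
Local Open Scope ring_scope.
Local Open Scope complex_scope.

(* If rho1 and rho2 are feasible for O_s1(N1) and O_s2(N2),
   then rho1 (x) rho2, with its factors reordered from (r1 a1)(r2 a2) to (r1 r2)(a1 a2), is a
   state (write each rho_k as X X^* via the spectral theorem) of purity
   Tr rho1^2 Tr rho2^2 <= s1 s2.  Its entanglement fidelity under N1 (x) N2 is the product of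
   the two fidelities, because for a linear map the fidelity is d^-1 Tr (rho C^T) with C the
   Choi matrix, and both the Choi matrix and this trace pairing are multiplicative under (x).
   Taking suprema gives O_s1(N1) O_s2(N2) <= O_t(N1 (x) N2) whenever s1 s2 <= t; the suprema
   range over nonempty sets because 1/d^2 <= s makes the maximally mixed state feasible, and
   are finite because purity <= 1 bounds the entries of rho.  The two claims are the cases
   s1 = s2 = t (as t^2 <= t) and s1 = s2 = sqrt t. *)

Section MatrixIndex.
Variable K : pzSemiRingType.

Lemma sum_mxtens_index (V : nmodType) m n (F : 'I_(m * n) -> V) :
  \sum_k F k = \sum_i \sum_j F (mxtens_index (i, j)).
Proof.
rewrite (reindex (@mxtens_index m n)) /=; last first.
  by exists (@mxtens_unindex m n) => k _; rewrite ?mxtens_indexK ?mxtens_unindexK.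
by rewrite pair_bigA; apply: eq_bigr => -[].
Qed.

Lemma sum_eq_natr_mul n (a : 'I_n) (F : 'I_n -> K) :
  \sum_i (a == i)%:R * F i = F a.
Proof.
rewrite (bigD1 a) //= eqxx mul1r big1 ?addr0 // => i.
by rewrite eq_sym => /negbTE ->; rewrite mul0r.
Qed.

Lemma mxtrace_mul_trmx m n (A B : 'M[K]_(m, n)) :
  \tr (A *m B^T) = \sum_p \sum_q A p q * B p q.
Proof. by apply: eq_bigr => p _; rewrite mxE; apply: eq_bigr => q _; rewrite mxE. Qed.

Section Bijective.
Variables (n n' : nat) (f : 'I_n -> 'I_n').
Hypothesis f_bij : bijective f.

Lemma mxsub_mulmx_bij (A B : 'M[K]_n') :
  mxsub f f (A *m B) = mxsub f f A *m mxsub f f B.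
Proof.
apply/matrixP => i j; rewrite !mxE (reindex f) /=; last exact: onW_bij.
by apply: eq_bigr => k _; rewrite !mxE.
Qed.

Lemma mxtrace_mxsub_bij (A : 'M[K]_n') : \tr (mxsub f f A) = \tr A.
Proof.
rewrite /mxtrace [RHS](reindex f) /=; last exact: onW_bij.
by apply: eq_bigr => k _; rewrite mxE.
Qed.

End Bijective.

Definition tens_shuffle m n p q (k : 'I_((m * n) * (p * q))) : 'I_((m * p) * (n * q)) :=
  let: (x, y) := mxtens_unindex k in
  let: (x1, x2) := mxtens_unindex x in
  let: (y1, y2) := mxtens_unindex y in
  mxtens_index (mxtens_index (x1, y1), mxtens_index (x2, y2)).

Lemma tens_shuffleE m n p q (x1 : 'I_m) (x2 : 'I_n) (y1 : 'I_p) (y2 : 'I_q) :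
  tens_shuffle (mxtens_index (mxtens_index (x1, x2), mxtens_index (y1, y2))) =
  mxtens_index (mxtens_index (x1, y1), mxtens_index (x2, y2)).
Proof. by rewrite /tens_shuffle !mxtens_indexK. Qed.

Lemma tens_shuffleK m n p q :
  cancel (@tens_shuffle m n p q) (@tens_shuffle m p n q).
Proof.
move=> k; case: (mxtens_indexP k) => x y.
case: (mxtens_indexP x) => x1 x2; case: (mxtens_indexP y) => y1 y2.
by rewrite !tens_shuffleE.
Qed.

Lemma tens_shuffle_bij m n p q : bijective (@tens_shuffle m n p q).
Proof. exact: Bijective (@tens_shuffleK m n p q) (@tens_shuffleK m p n q). Qed.

End MatrixIndex.

Lemma mxtrace_tens (K : comPzRingType) m n (A : 'M[K]_m) (B : 'M[K]_n) :
  \tr (A *t B) = \tr A * \tr B.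
Proof.
rewrite /mxtrace sum_mxtens_index big_distrl /=; apply: eq_bigr => i _.
by rewrite big_distrr; apply: eq_bigr => j _; rewrite tensmxE.
Qed.

Lemma sum_delta_mx_scale (K : pzRingType) (V : lmodType K) m n (a : 'I_m) (b : 'I_n)
    (F : 'I_m -> 'I_n -> V) :
  \sum_i \sum_j delta_mx a b i j *: F i j = F a b.
Proof.
rewrite pair_bigA (bigD1 (a, b)) //= mxE !eqxx scale1r big1 ?addr0 // => -[i j] ne.
by rewrite mxE -xpair_eqE (negbTE ne) scale0r.
Qed.

Lemma tens_delta_mx (K : pzRingType) m n p q (a1 : 'I_m) (b1 : 'I_n) (a2 : 'I_p) (b2 : 'I_q) :
  delta_mx (mxtens_index (a1, a2)) (mxtens_index (b1, b2)) =
  delta_mx a1 b1 *t delta_mx a2 b2 :> 'M[K]_(m * p, n * q).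
Proof.
apply/matrixP => i j; case: (mxtens_indexP i) => i1 i2; case: (mxtens_indexP j) => j1 j2.
rewrite tensmxE !mxE !(inj_eq (can_inj (@mxtens_indexK _ _))) !xpair_eqE.
by rewrite -natrM mulnb andbACA.
Qed.

Section Positivity.
Variable R : realType.
Local Notation C := R[i].

Lemma adjmxE m n (A : 'M[C]_(m, n)) i j : adjmx A i j = Num.conj (A j i).
Proof. by rewrite !mxE. Qed.

Lemma adjmxK m n (A : 'M[C]_(m, n)) : adjmx (adjmx A) = A.
Proof. exact: trmxCK. Qed.

Lemma adjmxM m n p (A : 'M[C]_(m, n)) (B : 'M[C]_(n, p)) :
  adjmx (A *m B) = adjmx B *m adjmx A.
Proof. by rewrite /adjmx trmx_mul map_mxM. Qed.

Lemma adjmx_tens m n p q (A : 'M[C]_(m, n)) (B : 'M[C]_(p, q)) :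
  adjmx (A *t B) = adjmx A *t adjmx B.
Proof. by rewrite /adjmx trmx_tens map_mxT. Qed.

Lemma adjmx_formE n (A : 'M[C]_n) (v : 'cV[C]_n) :
  (adjmx v *m A *m v) 0 0 = \sum_p \sum_q Num.conj (v p 0) * A p q * v q 0.
Proof.
rewrite mxE exchange_big; apply: eq_bigr => q _.
by rewrite mxE big_distrl; apply: eq_bigr => p _; rewrite adjmxE.
Qed.

Lemma psd_mul_adjmx m n (X : 'M[C]_(m, n)) : psd (X *m adjmx X).
Proof.
split; first by rewrite adjmxM adjmxK.
move=> v; rewrite mulmxA -mulmxA -[adjmx v *m X]adjmxK adjmxM adjmxK mxE.
by apply: sumr_ge0 => k _; rewrite adjmxE mulrC mul_conjC_ge0.
Qed.

Section Spectral.
Variables (n : nat) (A : 'M[C]_n).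
Hypothesis A_psd : psd A.
Local Notation P := (spectralmx A).
Local Notation D := (spectral_diag A).

Lemma psd_spectralE : A = adjmx P *m diag_mx D *m P.
Proof.
have /orthomx_spectralP : A \is normalmx.
  by apply/normalmxP; rewrite -/(adjmx A) A_psd.1.
by rewrite invmx_unitary //; apply: spectral_unitarymx.
Qed.

Lemma unitary_spectralmx : P *m adjmx P = 1%:M.
Proof. by apply/unitarymxP; apply: spectral_unitarymx. Qed.

Lemma psd_spectral_diagE : P *m A *m adjmx P = diag_mx D.
Proof.
rewrite {2}psd_spectralE !mulmxA unitary_spectralmx mul1mx.
by rewrite -mulmxA unitary_spectralmx mulmx1.
Qed.

Lemma psd_spectral_diag_ge0 k : 0 <= D 0 k.
Proof.
have := A_psd.2 (col k (adjmx P)).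
have -> : adjmx (col k (adjmx P)) = row k P.
  by apply/matrixP => i j; rewrite !(adjmxE, mxE) conjCK.
suff -> : (row k P *m A *m col k (adjmx P)) 0 0 = D 0 k by [].
have := congr1 (fun M : 'M[C]_n => M k k) psd_spectral_diagE.
rewrite [X in _ = X]mxE eqxx mulr1n => <-; rewrite -row_mul !mxE.
by apply: eq_bigr => j _; rewrite !mxE.
Qed.

Lemma psd_factor : exists X : 'M[C]_n, A = X *m adjmx X.
Proof.
pose X := adjmx P *m diag_mx (\row_k sqrtC (D 0 k)).
exists X; rewrite /X adjmxM adjmxK !mulmxA {1}psd_spectralE.
congr (_ *m _); rewrite -mulmxA; congr (_ *m _).
apply/matrixP => i j; rewrite mul_diag_mx !mxE.
have [<-|_] := eqVneq i j; last by rewrite /= !mulr0n conjC0 mulr0.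
have D_real : sqrtC (D 0 i) \is Num.real.
  by rewrite ger0_real // sqrtC_ge0 psd_spectral_diag_ge0.
by rewrite /= !mulr1n (conj_Creal D_real) -expr2 sqrtCK.
Qed.

End Spectral.

Lemma psd_tens m n (A : 'M[C]_m) (B : 'M[C]_n) : psd A -> psd B -> psd (A *t B).
Proof.
move=> /psd_factor [X ->] /psd_factor [Y ->].
by rewrite -tensmx_mul -adjmx_tens; apply: psd_mul_adjmx.
Qed.

Lemma psd_mxsub_bij n n' (f : 'I_n -> 'I_n') (A : 'M[C]_n') :
  bijective f -> psd A -> psd (mxsub f f A).
Proof.
move=> [g fK gK] [A_herm A_form]; split.
  by apply/matrixP => i j; rewrite -[in RHS]A_herm !mxE.
move=> v; have := A_form (\col_k v (g k) 0).
have f_bij : {on predT, bijective f} by exists g => x _.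
rewrite !adjmx_formE (reindex f) //=; congr (_ <= _); apply: eq_bigr => p _.
by rewrite (reindex f) //=; apply: eq_bigr => q _; rewrite !mxE !fK.
Qed.

Lemma mxtrace_sqr_hermitian n (A : 'M[C]_n) : adjmx A = A ->
  \tr (A *m A) = \sum_p \sum_q `|A p q| ^+ 2.
Proof.
move=> A_herm; apply: eq_bigr => p _; rewrite mxE; apply: eq_bigr => q _.
by rewrite -{2}A_herm adjmxE normCK.
Qed.

Lemma mxtrace_sqr_hermitian_ge0 n (A : 'M[C]_n) : adjmx A = A -> 0 <= \tr (A *m A).
Proof.
by move=> /mxtrace_sqr_hermitian ->; do 2![apply: sumr_ge0 => ? _]; apply: exprn_ge0.
Qed.

Lemma hermitian_entry_le1 n (A : 'M[C]_n) p q : adjmx A = A -> \tr (A *m A) <= 1 ->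
  `|A p q| <= 1.
Proof.
move=> A_herm; rewrite mxtrace_sqr_hermitian // => A_le1.
rewrite -(expr_le1 (n := 2)) //; apply: le_trans A_le1.
rewrite (bigD1 p) //= (bigD1 q) //= -addrA lerDl.
by apply: addr_ge0; do ?[apply: sumr_ge0 => ? _]; apply: exprn_ge0.
Qed.

End Positivity.

Section Fidelity.
Variable R : realType.
Local Notation C := R[i].

Lemma max_ent_formE d (A : 'M[C]_(d * d)) :
  (adjmx (max_ent R d) *m A *m max_ent R d) 0 0 =
  d%:R^-1 * \sum_i \sum_j A (mxtens_index (i, i)) (mxtens_index (j, j)).
Proof.
set c : C := ((Num.sqrt (d%:R : R))^-1)%:C.
pose e (k : 'I_(d * d)) : C :=
  if (mxtens_unindex k).1 == (mxtens_unindex k).2 :> nat then 1 else 0.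
have c_sqr : c * c = d%:R^-1.
  rewrite -rmorphM -invfM -expr2 sqr_sqrtr ?ler0n // fmorphV.
  by rewrite (rmorph_nat (real_complex R)).
have c_real : Num.conj c = c by exact: conjc_real.
have vE k : max_ent R d k 0 = c * e k by rewrite !mxE.
have e_real k : Num.conj (e k) = e k by rewrite /e; case: ifP; rewrite ?conjC1 ?conjC0.
have sum_e (F : 'I_(d * d) -> C) : \sum_k e k * F k = \sum_i F (mxtens_index (i, i)).
  rewrite sum_mxtens_index; apply: eq_bigr => i _.
  rewrite -(sum_eq_natr_mul i (fun j => F (mxtens_index (i, j)))).
  by apply: eq_bigr => j _; rewrite /e mxtens_indexK /= val_eqE; case: (i == j).
transitivity (c * c * \sum_p e p * \sum_q e q * A p q); last first.
  by rewrite c_sqr sum_e; under eq_bigr do rewrite sum_e.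
rewrite adjmx_formE big_distrr; apply: eq_bigr => p _.
rewrite mulr_sumr big_distrr; apply: eq_bigr => q _ /=.
by rewrite !vE rmorphM /= c_real e_real; ring.
Qed.

Lemma id_tensE d k (N : 'M[C]_d -> 'M[C]_d) (X : 'M[C]_(k * d)) i a j b :
  id_tens N X (mxtens_index (i, a)) (mxtens_index (j, b)) = N (blockmx X i j) a b.
Proof.
rewrite /id_tens summxE (bigD1 i) //= [X in _ + X]big1 => [|i' ne]; last first.
  by rewrite summxE big1 // => j' _; rewrite tensmxE mxE eq_sym (negbTE ne) mul0r.
rewrite addr0 summxE (bigD1 j) //= [X in _ + X]big1 => [|j' ne]; last first.
  by rewrite tensmxE mxE eqxx eq_sym (negbTE ne) mul0r.
by rewrite addr0 tensmxE mxE !eqxx mul1r.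
Qed.

(* The Choi matrix [\sum_(a, b) N (delta_mx a b) *t delta_mx a b] of [N]. *)
Definition choi d (N : 'M[C]_d -> 'M[C]_d) : 'M[C]_(d * d) :=
  \matrix_(p, q) N (delta_mx (mxtens_unindex p).2 (mxtens_unindex q).2)
                   (mxtens_unindex p).1 (mxtens_unindex q).1.

Lemma choiE d (N : 'M[C]_d -> 'M[C]_d) i a j b :
  choi N (mxtens_index (i, a)) (mxtens_index (j, b)) = N (delta_mx a b) i j.
Proof. by rewrite mxE !mxtens_indexK. Qed.

Section LinearMap.
Variables (d : nat) (N : 'M[C]_d -> 'M[C]_d).
Hypothesis N_lin : linear N.
HB.instance Definition _ := GRing.isLinear.Build C _ _ _ N N_lin.

Lemma linear_delta_expand X : N X = \sum_a \sum_b X a b *: N (delta_mx a b).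
Proof.
rewrite {1}[X]matrix_sum_delta linear_sum; apply: eq_bigr => a _.
by rewrite linear_sum; apply: eq_bigr => b _; rewrite linearZ.
Qed.

Lemma ent_fid_choi rho : ent_fid N rho = d%:R^-1 * \tr (rho *m (choi N)^T).
Proof.
rewrite /ent_fid max_ent_formE mxtrace_mul_trmx sum_mxtens_index; congr (_ * _).
apply: eq_bigr => i _; under [RHS]eq_bigr do rewrite sum_mxtens_index.
rewrite [RHS]exchange_big; apply: eq_bigr => j _.
rewrite id_tensE linear_delta_expand summxE; apply: eq_bigr => a _.
rewrite summxE; apply: eq_bigr => b _.
by rewrite choiE !mxE.
Qed.

Lemma ent_fid_bounded : exists K : C, forall rho : 'M[C]_(d * d),
  (forall p q, `|rho p q| <= 1) -> `|ent_fid N rho| <= K.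
Proof.
exists (`|d%:R^-1| * \sum_p \sum_q `|choi N p q|) => rho rho_le1.
rewrite ent_fid_choi mxtrace_mul_trmx normrM ler_wpM2l //.
apply: le_trans (ler_norm_sum _ _ _) (ler_sum _ _) => p _.
apply: le_trans (ler_norm_sum _ _ _) (ler_sum _ _) => q _.
by rewrite normrM ler_piMl.
Qed.

End LinearMap.

Section TensorProduct.
Variables (d1 d2 : nat) (N1 : 'M[C]_d1 -> 'M[C]_d1) (N2 : 'M[C]_d2 -> 'M[C]_d2).

Lemma chan_tens_linear : linear (chan_tens N1 N2).
Proof.
move=> a X Y; rewrite /chan_tens scaler_sumr -big_split; apply: eq_bigr => i1 _.
rewrite scaler_sumr -big_split; apply: eq_bigr => j1 _.
rewrite scaler_sumr -big_split; apply: eq_bigr => i2 _.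
rewrite scaler_sumr -big_split; apply: eq_bigr => j2 _.
by rewrite !mxE scalerA scalerDl.
Qed.

Lemma chan_tens_delta a1 b1 a2 b2 :
  chan_tens N1 N2 (delta_mx (mxtens_index (a1, a2)) (mxtens_index (b1, b2))) =
  N1 (delta_mx a1 b1) *t N2 (delta_mx a2 b2).
Proof.
pose F i1 j1 i2 j2 := N1 (delta_mx i1 j1) *t N2 (delta_mx i2 j2).
rewrite -[RHS]/(F a1 b1 a2 b2) -(sum_delta_mx_scale a1 b1 (fun i1 j1 => F i1 j1 a2 b2)).
apply: eq_bigr => i1 _; apply: eq_bigr => j1 _.
rewrite -(sum_delta_mx_scale a2 b2 (F i1 j1)) scaler_sumr; apply: eq_bigr => i2 _.
by rewrite scaler_sumr; apply: eq_bigr => j2 _; rewrite tens_delta_mx tensmxE scalerA.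
Qed.

Let shuffle_bij : bijective (@tens_shuffle d1 d2 d1 d2) := tens_shuffle_bij d1 d2 d1 d2.

(* [A *t B] is indexed by (r1, a1), (r2, a2), whereas [chan_tens] and [max_ent (d1 * d2)]
   order the reference and input factors as (r1, r2), (a1, a2). *)
Definition tensmx_shuffle (A : 'M[C]_(d1 * d1)) (B : 'M[C]_(d2 * d2)) :
    'M[C]_((d1 * d2) * (d1 * d2)) :=
  mxsub (@tens_shuffle d1 d2 d1 d2) (@tens_shuffle d1 d2 d1 d2) (A *t B).

Lemma choi_chan_tens : choi (chan_tens N1 N2) = tensmx_shuffle (choi N1) (choi N2).
Proof.
apply/matrixP => p q; case: (mxtens_indexP p) => i a; case: (mxtens_indexP q) => j b.
case: (mxtens_indexP i) => i1 i2; case: (mxtens_indexP a) => a1 a2.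
case: (mxtens_indexP j) => j1 j2; case: (mxtens_indexP b) => b1 b2.
by rewrite choiE chan_tens_delta tensmxE /tensmx_shuffle mxE !tens_shuffleE tensmxE !choiE.
Qed.

Lemma ent_fid_chan_tens rho1 rho2 : linear N1 -> linear N2 ->
  ent_fid (chan_tens N1 N2) (tensmx_shuffle rho1 rho2) = ent_fid N1 rho1 * ent_fid N2 rho2.
Proof.
move=> N1_lin N2_lin; rewrite !ent_fid_choi //; last exact: chan_tens_linear.
rewrite choi_chan_tens /tensmx_shuffle trmx_mxsub -(mxsub_mulmx_bij shuffle_bij).
rewrite (mxtrace_mxsub_bij shuffle_bij) trmx_tens tensmx_mul mxtrace_tens.
by rewrite natrM invfM mulrACA.
Qed.

Lemma tensmx_shuffle_state rho1 rho2 : is_state rho1 -> is_state rho2 ->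
  is_state (tensmx_shuffle rho1 rho2).
Proof.
move=> [psd1 tr1] [psd2 tr2]; split; first exact/psd_mxsub_bij/psd_tens.
by rewrite (mxtrace_mxsub_bij shuffle_bij) mxtrace_tens tr1 tr2 mulr1.
Qed.

Lemma mxtrace_tensmx_shuffle_sqr rho1 rho2 :
  \tr (tensmx_shuffle rho1 rho2 *m tensmx_shuffle rho1 rho2) =
  \tr (rho1 *m rho1) * \tr (rho2 *m rho2).
Proof.
rewrite -(mxsub_mulmx_bij shuffle_bij) (mxtrace_mxsub_bij shuffle_bij).
by rewrite tensmx_mul mxtrace_tens.
Qed.

End TensorProduct.

Lemma ent_fid_ge0 d (N : 'M[C]_d -> 'M[C]_d) rho :
  is_channel N -> is_state rho -> 0 <= ent_fid N rho.
Proof. by case=> _ N_cp _ [rho_psd _]; exact: (N_cp d rho rho_psd).2. Qed.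

Lemma maximally_mixed_state d : (0 < d)%N -> exists rho : 'M[C]_(d * d),
  is_state rho /\ \tr (rho *m rho) = ((d%:R ^+ 2)^-1)%:C.
Proof.
move=> d_gt0; set c : R := (d%:R ^+ 2)^-1.
have c_ge0 : 0 <= c by rewrite invr_ge0 exprn_ge0 ?ler0n.
have c_dd : c * (d * d)%:R = 1 by rewrite natrM -expr2 mulVf // expf_neq0 // pnatr_eq0 -lt0n.
have natrC k : (k%:R : C) = (k%:R : R)%:C by rewrite (rmorph_nat (real_complex R)).
exists (c%:C)%:M; split; [split; [split|] |].
- apply/matrixP => i j; rewrite adjmxE !mxE eq_sym.
  by case: (i == j); rewrite ?mulr1n ?mulr0n ?conjC0 //; exact: conjc_real.
- move=> v; rewrite mul_mx_scalar -scalemxAl mxE mulr_ge0 ?ler0c //.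
  by rewrite mxE sumr_ge0 // => k _; rewrite adjmxE mulrC mul_conjC_ge0.
- by rewrite mxtrace_scalar -mulr_natr natrC -rmorphM /= c_dd.
by rewrite -scalar_mxM mxtrace_scalar -mulr_natr natrC -!rmorphM /= -mulrA c_dd mulr1.
Qed.

End Fidelity.

Section Sup.
Variable R : realType.
Local Open Scope classical_set_scope.

(* No bound on [A] or [B] is needed: [sup] of a set without a supremum is [0]. *)
Lemma mul_sup_le (A B S : set R) : (exists a, A a) -> (exists b, B b) ->
  (forall a, A a -> 0 <= a) -> (forall b, B b -> 0 <= b) -> has_ubound S ->
  (forall a b, A a -> B b -> S (a * b)) -> sup A * sup B <= sup S.
Proof.
move=> [a0 Aa0] [b0 Bb0] A_ge0 B_ge0 S_ub AB_S.
have S_sup : has_sup S by split => //; exists (a0 * b0); exact: AB_S.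
have le_supS c : S c -> c <= sup S by move=> Sc; exact: sup_upper_bound.
have supS_ge0 : 0 <= sup S.
  exact: le_trans (mulr_ge0 (A_ge0 _ Aa0) (B_ge0 _ Bb0)) (le_supS _ (AB_S _ _ Aa0 Bb0)).
have [A_sup|A_nsup] := pselect (has_sup A); last by rewrite (sup_out A_nsup) mul0r.
have [B_sup|B_nsup] := pselect (has_sup B); last by rewrite (sup_out B_nsup) mulr0.
have supA_ge0 : 0 <= sup A by apply: le_trans (A_ge0 _ Aa0) (sup_upper_bound _ _).
have supA_mul b : B b -> sup A * b <= sup S.
  move=> Bb; have [->|b_neq0] := eqVneq b 0; first by rewrite mulr0.
  have b_gt0 : 0 < b by rewrite lt_def b_neq0 B_ge0.
  rewrite -ler_pdivlMr //; apply: ge_sup; first by exists a0.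
  by move=> a Aa; rewrite ler_pdivlMr //; exact: le_supS (AB_S _ _ Aa Bb).
have [->|supA_neq0] := eqVneq (sup A) 0; first by rewrite mul0r.
have supA_gt0 : 0 < sup A by rewrite lt_def supA_neq0 supA_ge0.
rewrite mulrC -ler_pdivlMr //; apply: ge_sup; first by exists b0.
by move=> b Bb; rewrite ler_pdivlMr // mulrC; exact: supA_mul.
Qed.

End Sup.

Section Optimum.
Variable R : realType.
Local Notation C := R[i].

Definition fid_values d (s : R) (N : 'M[C]_d -> 'M[C]_d) : set R :=
  [set x : R | exists rho : 'M[C]_(d * d),
     [/\ is_state rho, \tr (rho *m rho) <= s%:C & x%:C = ent_fid N rho]].

Lemma fid_values_ge0 d s (N : 'M[C]_d -> 'M[C]_d) x :
  is_channel N -> fid_values s N x -> 0 <= x.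
Proof. by move=> N_ch [rho [rho_st _ x_fid]]; rewrite -ler0c x_fid ent_fid_ge0. Qed.

Lemma fid_values_nonempty d s (N : 'M[C]_d -> 'M[C]_d) :
  (0 < d)%N -> is_channel N -> (d%:R ^+ 2)^-1 <= s -> exists x, fid_values s N x.
Proof.
move=> d_gt0 N_ch s_ge; have [rho [rho_st rho_pur]] := maximally_mixed_state R d_gt0.
exists (complex.Re (ent_fid N rho)), rho; split => //; first by rewrite rho_pur lecR.
by rewrite RRe_real // ger0_real // ent_fid_ge0.
Qed.

Lemma fid_values_bounded d s (N : 'M[C]_d -> 'M[C]_d) :
  linear N -> s <= 1 -> has_ubound (fid_values s N).
Proof.
move=> N_lin s_le1; have [K K_bound] := ent_fid_bounded N_lin.
exists (complex.Re K) => x [rho [[[rho_herm _] _] rho_pur x_fid]].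
suff : x%:C <= K by rewrite lecE => /andP[].
have x_real : x%:C \is Num.real by rewrite complex_real.
apply: le_trans (real_ler_norm x_real) _; rewrite x_fid.
apply: K_bound => p q; apply: hermitian_entry_le1 rho_herm _.
by apply: le_trans rho_pur _; rewrite -(rmorph1 (real_complex R)) lecR.
Qed.

Lemma fid_values_mul d1 d2 (N1 : 'M[C]_d1 -> 'M[C]_d1) (N2 : 'M[C]_d2 -> 'M[C]_d2)
    s1 s2 t x1 x2 : linear N1 -> linear N2 -> s1 * s2 <= t ->
  fid_values s1 N1 x1 -> fid_values s2 N2 x2 -> fid_values t (chan_tens N1 N2) (x1 * x2).
Proof.
move=> N1_lin N2_lin s_le [rho1 [st1 pur1 x1_fid]] [rho2 [st2 pur2 x2_fid]].
exists (tensmx_shuffle rho1 rho2); split; first exact: tensmx_shuffle_state.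
  rewrite mxtrace_tensmx_shuffle_sqr (le_trans (ler_pM _ _ pur1 pur2)) //.
  - exact: mxtrace_sqr_hermitian_ge0 st1.1.1.
  - exact: mxtrace_sqr_hermitian_ge0 st2.1.1.
  by rewrite -rmorphM lecR.
by rewrite ent_fid_chan_tens // rmorphM /= x1_fid x2_fid.
Qed.

Lemma Opt_chan_tens_ge d1 d2 (N1 : 'M[C]_d1 -> 'M[C]_d1) (N2 : 'M[C]_d2 -> 'M[C]_d2)
    s1 s2 t : (0 < d1)%N -> (0 < d2)%N -> is_channel N1 -> is_channel N2 ->
  (d1%:R ^+ 2)^-1 <= s1 -> (d2%:R ^+ 2)^-1 <= s2 -> s1 * s2 <= t -> t <= 1 ->
  Opt s1 N1 * Opt s2 N2 <= Opt t (chan_tens N1 N2).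
Proof.
move=> d1_gt0 d2_gt0 N1_ch N2_ch s1_ge s2_ge s_le t_le1.
have [N1_lin _ _] := N1_ch; have [N2_lin _ _] := N2_ch.
apply: mul_sup_le; [exact: fid_values_nonempty | exact: fid_values_nonempty | | | |].
- by move=> x; apply: fid_values_ge0.
- by move=> x; apply: fid_values_ge0.
- exact: fid_values_bounded (chan_tens_linear N1 N2) t_le1.
- by move=> x1 x2; apply: fid_values_mul.
Qed.

End Optimum.

Theorem mainTheorem7 (R : realType) (d1 d2 : nat) (hd1 : (0 < d1)%N) (hd2 : (0 < d2)%N)
  (N1 : 'M[R[i]]_d1 -> 'M[R[i]]_d1) (N2 : 'M[R[i]]_d2 -> 'M[R[i]]_d2)
  (hN1 : is_channel N1) (hN2 : is_channel N2) (t : R) (ht0 : 0 < t) (ht1 : t <= 1) :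
  (Num.max (d1%:R ^+ 2)^-1 (d2%:R ^+ 2)^-1 <= t ->
     Opt t (chan_tens N1 N2) >= Opt t N1 * Opt t N2) /\
  (Num.max (d1%:R ^+ 2)^-1 (d2%:R ^+ 2)^-1 <= Num.sqrt t ->
     Opt t (chan_tens N1 N2) >= Opt (Num.sqrt t) N1 * Opt (Num.sqrt t) N2).
Proof.
have t_ge0 := ltW ht0.
split; rewrite ge_max => /andP[le1 le2]; apply: Opt_chan_tens_ge => //.
- exact: ler_piMr.
- by rewrite -expr2 sqr_sqrtr.
Qed.
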